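(* Let $W$ be a central type and let $t$ be a closed expression with $\vdash t:W$ in $\mathcal{L}$ (the rule (struct) may be used). For all values $v$ and lists of resources $l,l'$, if $\langle t\mid\star\mid l\rangle^+\rightsquigarrow^*\langle v\mid\star\mid l'\rangle^{\varepsilon}$ for some polarity $\varepsilon$, then there exists a permutation $\sigma$ such that $l'=\sigma(l)$ (i.e. $l'$ is obtained by reordering the elements of $l$).
   Context: Polarities are $\varepsilon\in\{+,-\}$. Types: positive $P,Q ::= R \mid 1 \mid A\otimes B \mid A\oplus B$; negative $N,M ::= A\multimap B \mid A\,\&\,B$; $\varpi(P)=+$, $\varpi(N)=-$ ($R$ is an atomic type of resources). Central types are $W ::= 1\mid W\otimes W'\mid W\oplus W'$. Fix variables and resource constants $r_n$ ($n\in\mathbb N$). Expressions $t,u$ and values $v,w$: $t,u ::= v \mid (\mathrm{let}\ x^+=t\ \mathrm{in}\ u)^+ \mid (\mathrm{let}\ x^-=v\ \mathrm{in}\ u)^+ \mid \delta(v,(x,y).t)^+ \mid \delta(v,().t)^+ \mid \delta(v,x.t,y.u)^+ \mid (v\,w)^+ \mid (\pi_1 v)^+ \mid (\pi_2 v)^+$; $v,w ::= (\mathrm{let}\ x^+=t\ \mathrm{in}\ v)^- \mid (\mathrm{let}\ x^-=v\ \mathrm{in}\ w)^- \mid \delta(v,(x,y).w)^- \mid \delta(v,().w)^- \mid \delta(v,x.w,y.w')^- \mid (v\,w)^- \mid (\pi_1 v)^- \mid (\pi_2 v)^- \mid x \mid \mathrm{new} \mid \mathrm{delete} \mid (v,w)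 \mid () \mid \iota_1 v \mid \iota_2 v \mid \lambda x.t \mid \langle t,u\rangle \mid r_n$. $t[v/x]$ is capture-avoiding substitution. Contexts are finite lists of typed variables. Typing rules of $\mathcal{L}$ ($v,w$ range over values): (var) $x:A\vdash x:A$. (struct) from $\Gamma\vdash t:A$ and a type-preserving bijection $\sigma$ from entries of $\Gamma$ to entries of $\Gamma'$ (permutation plus renaming) derive $\Gamma'\vdash t[\sigma]:A$. $\vdash\mathrm{new}:1\multimap(R\oplus 1)$; $\vdash\mathrm{delete}:R\multimap 1$. (let) from $\Delta\vdash t:A$, $\Gamma,x:A\vdash u:B$ derive $\Gamma,\Delta\vdash(\mathrm{let}\ x^{\varpi(A)}=t\ \mathrm{in}\ u)^{\varpi(B)}:B$. From $\Gamma\vdash v:A$, $\Delta\vdash w:B$ derive $\Gamma,\Delta\vdash(v,w):A\otimes B$; from $\Delta\vdash v:A\otimes B$, $\Gamma,x:A,y:B,\Gamma'\vdash t:C$ derive $\Gamma,\Delta,\Gamma'\vdash\delta(v,(x,y).t)^{\varpi(C)}:C$. $\vdash():1$; from $\Delta\vdash v:1$, $\Gamma,\Gamma'\vdash t:A$ derive $\Gamma,\Delta,\Gamma'\vdash\delta(v,().t)^{\varpi(A)}:A$. From $\Gamma\vdash v:A$ derive $\Gamma\vdash\iota_1v:A\oplus B$; from $\Gamma\vdash v:B$ derive $\Gamma\vdash\iota_2v:A\oplus B$; from $\Delta\vdash v:A\oplus B$, $\Gamma,x:A,\Gamma'\vdash t:C$, $\Gamma,y:B,\Gamma'\vdash u:C$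 derive $\Gamma,\Delta,\Gamma'\vdash\delta(v,x.t,y.u)^{\varpi(C)}:C$. From $x:A,\Gamma\vdash t:B$ derive $\Gamma\vdash\lambda x.t:A\multimap B$; from $\Gamma\vdash w:A$, $\Delta\vdash v:A\multimap B$ derive $\Gamma,\Delta\vdash(v\,w)^{\varpi(B)}:B$. From $\Gamma\vdash t:A$, $\Gamma\vdash u:B$ derive $\Gamma\vdash\langle t,u\rangle:A\&B$; from $\Gamma\vdash v:A_1\&A_2$ derive $\Gamma\vdash(\pi_iv)^{\varpi(A_i)}:A_i$. Machine: stacks $s ::= \star \mid v^\varepsilon\cdot s \mid \pi_i^\varepsilon\cdot s \mid (x^+.u)^\varepsilon\cdot s$; lists of resources $l ::= []\mid r_n::l$ (the freelist); commands $\langle t\mid s\mid l\rangle^\varepsilon$; $\rightsquigarrow^*$ is the reflexive-transitive closure of the one-step reduction $\rightsquigarrow$ given by ($i\in\{1,2\}$): $\langle(\mathrm{let}\ x^-=v\ \mathrm{in}\ t)^\varepsilon\mid s\mid l\rangle^\varepsilon\rightsquigarrow\langle t[v/x]\mid s\mid l\rangle^\varepsilon$; $\langle(\mathrm{let}\ x^+=t\ \mathrm{in}\ u)^\varepsilon\mid s\mid l\rangle^\varepsilon\rightsquigarrow\langle t\mid (x^+.u)^\varepsilon\cdot s\mid l\rangle^+$; $\langle v\mid (x^+.t)^\varepsilon\cdot s\mid l\rangle^+\rightsquigarrow\langle t[v/x]\mid s\mid l\rangle^\varepsilon$; $\langle (v\,w)^\varepsilon\mid s\mid l\rangle^\varepsilon\rightsquigarrow\langle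 v\mid w^\varepsilon\cdot s\mid l\rangle^-$; $\langle \lambda x.t\mid v^\varepsilon\cdot s\mid l\rangle^-\rightsquigarrow\langle t[v/x]\mid s\mid l\rangle^\varepsilon$; $\langle (\pi_i v)^\varepsilon\mid s\mid l\rangle^\varepsilon\rightsquigarrow\langle v\mid \pi_i^\varepsilon\cdot s\mid l\rangle^-$; $\langle \langle t_1,t_2\rangle\mid \pi_i^\varepsilon\cdot s\mid l\rangle^-\rightsquigarrow\langle t_i\mid s\mid l\rangle^\varepsilon$; $\langle \delta((v,w),(x,y).t)^\varepsilon\mid s\mid l\rangle^\varepsilon\rightsquigarrow\langle t[v/x,w/y]\mid s\mid l\rangle^\varepsilon$; $\langle \delta((),().t)^\varepsilon\mid s\mid l\rangle^\varepsilon\rightsquigarrow\langle t\mid s\mid l\rangle^\varepsilon$; $\langle \delta(\iota_i v,x_1.t_1,x_2.t_2)^\varepsilon\mid s\mid l\rangle^\varepsilon\rightsquigarrow\langle t_i[v/x_i]\mid s\mid l\rangle^\varepsilon$; $\langle \mathrm{new}\mid ()^{\varepsilon}\cdot s\mid r_n::l\rangle^-\rightsquigarrow\langle \iota_1 r_n\mid s\mid l\rangle^+$; $\langle \mathrm{new}\mid ()^{\varepsilon}\cdot s\mid []\rangle^-\rightsquigarrow\langle \iota_2 ()\mid s\mid []\rangle^+$; $\langle \mathrm{delete}\mid r_n^{\varepsilon}\cdot s\mid l\rangle^-\rightsquigarrow\langle ()\mid s\mid r_n::l\rangle^+$. *)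

From Stdlib Require Import List Arith Permutation Relations.
Import ListNotations.

Inductive pol : Type := Pos | Neg.

Inductive ty : Type :=
| TR : ty                       (* atomic type of resources R *)
| TOne : ty
| TTensor : ty -> ty -> ty
| TPlus : ty -> ty -> ty
| TLolli : ty -> ty -> ty
| TWith : ty -> ty -> ty.

Definition tpol (A : ty) : pol :=
  match A with
  | TR | TOne | TTensor _ _ | TPlus _ _ => Pos
  | TLolli _ _ | TWith _ _ => Neg
  end.

Inductive central : ty -> Prop :=
| central_one : central TOne
| central_tensor W W' : central W -> central W' -> central (TTensor W W')
| central_plus W W' : central W -> central W' -> central (TPlus W W').

Inductive side : Type := I1 | I2.
Definition sel {T : Type} (i : side) (a b : T) : T :=
  match i with I1 => a | I2 => b end.

Definition var := nat.

(** Positive-annotated compound forms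
    ( ... )^+ are expression constructors, negative-annotated ones ( ... )^-
    are value constructors.  Resource constant r_n is [VRes n]. *)
Inductive expr : Type :=
| EVal : value -> expr
| ELetP : var -> expr -> expr -> expr                  (* (let x^+ = t in u)^+ *)
| ELetN : var -> value -> expr -> expr                 (* (let x^- = v in u)^+ *)
| EDtens : value -> var -> var -> expr -> expr
| EDunit : value -> expr -> expr
| EDsum : value -> var -> expr -> var -> expr -> expr
| EApp : value -> value -> expr
| EPi : side -> value -> expr
with value : Type :=
| VLetP : var -> expr -> value -> value                (* (let x^+ = t in v)^- *)
| VLetN : var -> value -> value -> value               (* (let x^- = v in w)^- *)
| VDtens : value -> var -> var -> value -> value
| VDunit : value -> value -> value
| VDsum : value -> var -> value -> var -> value -> value
| VApp : value -> value -> value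
| VPi : side -> value -> value
| VVar : var -> value
| VNew : value
| VDelete : value
| VPair : value -> value -> value
| VUnit : value
| VInj : side -> value -> value
| VLam : var -> expr -> value
| VWith : expr -> expr -> value
| VRes : nat -> value.

Fixpoint fv_e (t : expr) : list var :=
  match t with
  | EVal v => fv_v v
  | ELetP x t u => fv_e t ++ remove Nat.eq_dec x (fv_e u)
  | ELetN x v u => fv_v v ++ remove Nat.eq_dec x (fv_e u)
  | EDtens v x y t => fv_v v ++ remove Nat.eq_dec x (remove Nat.eq_dec y (fv_e t))
  | EDunit v t => fv_v v ++ fv_e t
  | EDsum v x t y u => fv_v v ++ remove Nat.eq_dec x (fv_e t) ++ remove Nat.eq_dec y (fv_e u)
  | EApp v w => fv_v v ++ fv_v w
  | EPi _ v => fv_v v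
  end
with fv_v (v : value) : list var :=
  match v with
  | VLetP x t w => fv_e t ++ remove Nat.eq_dec x (fv_v w)
  | VLetN x v w => fv_v v ++ remove Nat.eq_dec x (fv_v w)
  | VDtens v x y w => fv_v v ++ remove Nat.eq_dec x (remove Nat.eq_dec y (fv_v w))
  | VDunit v w => fv_v v ++ fv_v w
  | VDsum v x w y w' => fv_v v ++ remove Nat.eq_dec x (fv_v w) ++ remove Nat.eq_dec y (fv_v w')
  | VApp v w => fv_v v ++ fv_v w
  | VPi _ v => fv_v v
  | VVar x => [x]
  | VNew | VDelete | VUnit | VRes _ => []
  | VPair v w => fv_v v ++ fv_v w
  | VInj _ v => fv_v v
  | VLam x t => remove Nat.eq_dec x (fv_e t)
  | VWith t u => fv_e t ++ fv_e u
  end.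

Definition upd (s : var -> value) (x : var) (v : value) : var -> value :=
  fun z => if Nat.eq_dec z x then v else s z.

Definition range_fv (s : var -> value) (xs : list var) : list var :=
  flat_map (fun z => fv_v (s z)) xs.

Definition fresh_for (x : var) (avoid : list var) : var :=
  if in_dec Nat.eq_dec x avoid then S (list_max avoid) else x.

Fixpoint subst_e (s : var -> value) (t : expr) : expr :=
  match t with
  | EVal v => EVal (subst_v s v)
  | ELetP x t u =>
      let x' := fresh_for x (range_fv s (remove Nat.eq_dec x (fv_e u))) in
      ELetP x' (subst_e s t) (subst_e (upd s x (VVar x')) u)
  | ELetN x v u =>
      let x' := fresh_for x (range_fv s (remove Nat.eq_dec x (fv_e u))) in
      ELetN x' (subst_v s v) (subst_e (upd s x (VVar x')) u)
  | EDtens v x y t =>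
      let av := range_fv s (remove Nat.eq_dec x (remove Nat.eq_dec y (fv_e t))) in
      let x' := fresh_for x av in
      let y' := fresh_for y (x' :: av) in
      EDtens (subst_v s v) x' y' (subst_e (upd (upd s x (VVar x')) y (VVar y')) t)
  | EDunit v t => EDunit (subst_v s v) (subst_e s t)
  | EDsum v x t y u =>
      let x' := fresh_for x (range_fv s (remove Nat.eq_dec x (fv_e t))) in
      let y' := fresh_for y (range_fv s (remove Nat.eq_dec y (fv_e u))) in
      EDsum (subst_v s v) x' (subst_e (upd s x (VVar x')) t)
                          y' (subst_e (upd s y (VVar y')) u)
  | EApp v w => EApp (subst_v s v) (subst_v s w)
  | EPi i v => EPi i (subst_v s v)
  end
with subst_v (s : var -> value) (v : value) : value :=
  match v with
  | VLetP x t w =>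
      let x' := fresh_for x (range_fv s (remove Nat.eq_dec x (fv_v w))) in
      VLetP x' (subst_e s t) (subst_v (upd s x (VVar x')) w)
  | VLetN x v w =>
      let x' := fresh_for x (range_fv s (remove Nat.eq_dec x (fv_v w))) in
      VLetN x' (subst_v s v) (subst_v (upd s x (VVar x')) w)
  | VDtens v x y w =>
      let av := range_fv s (remove Nat.eq_dec x (remove Nat.eq_dec y (fv_v w))) in
      let x' := fresh_for x av in
      let y' := fresh_for y (x' :: av) in
      VDtens (subst_v s v) x' y' (subst_v (upd (upd s x (VVar x')) y (VVar y')) w)
  | VDunit v w => VDunit (subst_v s v) (subst_v s w)
  | VDsum v x w y w' =>
      let x' := fresh_for x (range_fv s (remove Nat.eq_dec x (fv_v w))) in
      let y' := fresh_for y (range_fv s (remove Nat.eq_dec y (fv_v w'))) in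
      VDsum (subst_v s v) x' (subst_v (upd s x (VVar x')) w)
                          y' (subst_v (upd s y (VVar y')) w')
  | VApp v w => VApp (subst_v s v) (subst_v s w)
  | VPi i v => VPi i (subst_v s v)
  | VVar x => s x
  | VNew => VNew
  | VDelete => VDelete
  | VPair v w => VPair (subst_v s v) (subst_v s w)
  | VUnit => VUnit
  | VInj i v => VInj i (subst_v s v)
  | VLam x t =>
      let x' := fresh_for x (range_fv s (remove Nat.eq_dec x (fv_e t))) in
      VLam x' (subst_e (upd s x (VVar x')) t)
  | VWith t u => VWith (subst_e s t) (subst_e s u)
  | VRes n => VRes n
  end.

Definition subst1 (t : expr) (v : value) (x : var) : expr := subst_e (upd VVar x v) t.
Definition subst1v (t : value) (v : value) (x : var) : value := subst_v (upd VVar x v) t.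
Definition subst2 (t : expr) (v : value) (x : var) (w : value) (y : var) : expr :=
  subst_e (upd (upd VVar x v) y w) t.
Definition subst2v (t : value) (v : value) (x : var) (w : value) (y : var) : value :=
  subst_v (upd (upd VVar x v) y w) t.

(** Typing.  Contexts are lists of typed variables; as usual, the variables of
    a context are pairwise distinct (checked where contexts are concatenated). *)
Definition ctx := list (var * ty).
Definition dom (G : ctx) : list var := map fst G.

Inductive has_type : ctx -> expr -> ty -> Prop :=
| T_var x A : has_type [(x, A)] (EVal (VVar x)) A
| T_struct G G' t A (rho : var -> var) :
    has_type G t A ->
    Permutation (map (fun p => (rho (fst p), snd p)) G) G' ->
    NoDup (dom G') ->
    has_type G' (subst_e (fun z => VVar (rho z)) t) A
| T_new : has_type [] (EVal VNew) (TLolli TOne (TPlus TR TOne))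
| T_delete : has_type [] (EVal VDelete) (TLolli TR TOne)
| T_let_PP G D x t u A B :
    tpol A = Pos -> tpol B = Pos ->
    has_type D t A -> has_type (G ++ [(x, A)]) u B -> NoDup (dom (G ++ D)) ->
    has_type (G ++ D) (ELetP x t u) B
| T_let_PN G D x t w A B :
    tpol A = Pos -> tpol B = Neg ->
    has_type D t A -> has_type (G ++ [(x, A)]) (EVal w) B -> NoDup (dom (G ++ D)) ->
    has_type (G ++ D) (EVal (VLetP x t w)) B
| T_let_NP G D x v u A B :
    tpol A = Neg -> tpol B = Pos ->
    has_type D (EVal v) A -> has_type (G ++ [(x, A)]) u B -> NoDup (dom (G ++ D)) ->
    has_type (G ++ D) (ELetN x v u) B
| T_let_NN G D x v w A B :
    tpol A = Neg -> tpol B = Neg ->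
    has_type D (EVal v) A -> has_type (G ++ [(x, A)]) (EVal w) B -> NoDup (dom (G ++ D)) ->
    has_type (G ++ D) (EVal (VLetN x v w)) B
| T_pair G D v w A B :
    has_type G (EVal v) A -> has_type D (EVal w) B -> NoDup (dom (G ++ D)) ->
    has_type (G ++ D) (EVal (VPair v w)) (TTensor A B)
| T_dtens_P G D G' v x y t A B C :
    tpol C = Pos ->
    has_type D (EVal v) (TTensor A B) ->
    has_type (G ++ (x, A) :: (y, B) :: G') t C ->
    NoDup (dom (G ++ D ++ G')) ->
    has_type (G ++ D ++ G') (EDtens v x y t) C
| T_dtens_N G D G' v x y w A B C :
    tpol C = Neg ->
    has_type D (EVal v) (TTensor A B) ->
    has_type (G ++ (x, A) :: (y, B) :: G') (EVal w) C ->
    NoDup (dom (G ++ D ++ G')) ->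
    has_type (G ++ D ++ G') (EVal (VDtens v x y w)) C
| T_unit : has_type [] (EVal VUnit) TOne
| T_dunit_P G D G' v t A :
    tpol A = Pos ->
    has_type D (EVal v) TOne -> has_type (G ++ G') t A ->
    NoDup (dom (G ++ D ++ G')) ->
    has_type (G ++ D ++ G') (EDunit v t) A
| T_dunit_N G D G' v w A :
    tpol A = Neg ->
    has_type D (EVal v) TOne -> has_type (G ++ G') (EVal w) A ->
    NoDup (dom (G ++ D ++ G')) ->
    has_type (G ++ D ++ G') (EVal (VDunit v w)) A
| T_inj (i : side) G v A1 A2 :
    has_type G (EVal v) (sel i A1 A2) ->
    has_type G (EVal (VInj i v)) (TPlus A1 A2)
| T_dsum_P G D G' v x t y u A B C :
    tpol C = Pos ->
    has_type D (EVal v) (TPlus A B) ->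
    has_type (G ++ (x, A) :: G') t C ->
    has_type (G ++ (y, B) :: G') u C ->
    NoDup (dom (G ++ D ++ G')) ->
    has_type (G ++ D ++ G') (EDsum v x t y u) C
| T_dsum_N G D G' v x w y w' A B C :
    tpol C = Neg ->
    has_type D (EVal v) (TPlus A B) ->
    has_type (G ++ (x, A) :: G') (EVal w) C ->
    has_type (G ++ (y, B) :: G') (EVal w') C ->
    NoDup (dom (G ++ D ++ G')) ->
    has_type (G ++ D ++ G') (EVal (VDsum v x w y w')) C
| T_lam x G t A B :
    has_type ((x, A) :: G) t B ->
    has_type G (EVal (VLam x t)) (TLolli A B)
| T_app_P G D w v A B :
    tpol B = Pos ->
    has_type G (EVal w) A -> has_type D (EVal v) (TLolli A B) ->
    NoDup (dom (G ++ D)) ->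
    has_type (G ++ D) (EApp v w) B
| T_app_N G D w v A B :
    tpol B = Neg ->
    has_type G (EVal w) A -> has_type D (EVal v) (TLolli A B) ->
    NoDup (dom (G ++ D)) ->
    has_type (G ++ D) (EVal (VApp v w)) B
| T_with G t u A B :
    has_type G t A -> has_type G u B ->
    has_type G (EVal (VWith t u)) (TWith A B)
| T_proj_P (i : side) G v A1 A2 :
    tpol (sel i A1 A2) = Pos ->
    has_type G (EVal v) (TWith A1 A2) ->
    has_type G (EPi i v) (sel i A1 A2)
| T_proj_N (i : side) G v A1 A2 :
    tpol (sel i A1 A2) = Neg ->
    has_type G (EVal v) (TWith A1 A2) ->
    has_type G (EVal (VPi i v)) (sel i A1 A2).

Inductive frame : Type :=
| FVal : value -> pol -> frame
| FProj : side -> pol -> frame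
| FLet : var -> expr -> pol -> frame.

Definition stack := list frame.
Definition reslist := list nat.            (* the list r_{n1} :: ... ; r_n is n *)

Record command : Type := Cmd { c_term : expr; c_stack : stack; c_res : reslist; c_pol : pol }.

Inductive step : command -> command -> Prop :=
| S_letN_P x v t s l : step (Cmd (ELetN x v t) s l Pos) (Cmd (subst1 t v x) s l Pos)
| S_letN_N x v w s l : step (Cmd (EVal (VLetN x v w)) s l Neg) (Cmd (EVal (subst1v w v x)) s l Neg)
| S_letP_P x t u s l : step (Cmd (ELetP x t u) s l Pos) (Cmd t (FLet x u Pos :: s) l Pos)
| S_letP_N x t w s l : step (Cmd (EVal (VLetP x t w)) s l Neg) (Cmd t (FLet x (EVal w) Neg :: s) l Pos)
| S_pop v x t e s l : step (Cmd (EVal v) (FLet x t e :: s) l Pos) (Cmd (subst1 t v x) s l e)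
| S_app_P v w s l : step (Cmd (EApp v w) s l Pos) (Cmd (EVal v) (FVal w Pos :: s) l Neg)
| S_app_N v w s l : step (Cmd (EVal (VApp v w)) s l Neg) (Cmd (EVal v) (FVal w Neg :: s) l Neg)
| S_lam x t v e s l : step (Cmd (EVal (VLam x t)) (FVal v e :: s) l Neg) (Cmd (subst1 t v x) s l e)
| S_proj_P i v s l : step (Cmd (EPi i v) s l Pos) (Cmd (EVal v) (FProj i Pos :: s) l Neg)
| S_proj_N i v s l : step (Cmd (EVal (VPi i v)) s l Neg) (Cmd (EVal v) (FProj i Neg :: s) l Neg)
| S_with i t1 t2 e s l : step (Cmd (EVal (VWith t1 t2)) (FProj i e :: s) l Neg) (Cmd (sel i t1 t2) s l e)
| S_dtens_P v w x y t s l :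
    step (Cmd (EDtens (VPair v w) x y t) s l Pos) (Cmd (subst2 t v x w y) s l Pos)
| S_dtens_N v w x y t s l :
    step (Cmd (EVal (VDtens (VPair v w) x y t)) s l Neg) (Cmd (EVal (subst2v t v x w y)) s l Neg)
| S_dunit_P t s l : step (Cmd (EDunit VUnit t) s l Pos) (Cmd t s l Pos)
| S_dunit_N t s l : step (Cmd (EVal (VDunit VUnit t)) s l Neg) (Cmd (EVal t) s l Neg)
| S_dsum_P i v x1 t1 x2 t2 s l :
    step (Cmd (EDsum (VInj i v) x1 t1 x2 t2) s l Pos)
         (Cmd (subst1 (sel i t1 t2) v (sel i x1 x2)) s l Pos)
| S_dsum_N i v x1 t1 x2 t2 s l :
    step (Cmd (EVal (VDsum (VInj i v) x1 t1 x2 t2)) s l Neg)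
         (Cmd (EVal (subst1v (sel i t1 t2) v (sel i x1 x2))) s l Neg)
| S_new_some e n s l :
    step (Cmd (EVal VNew) (FVal VUnit e :: s) (n :: l) Neg) (Cmd (EVal (VInj I1 (VRes n))) s l Pos)
| S_new_none e s :
    step (Cmd (EVal VNew) (FVal VUnit e :: s) [] Neg) (Cmd (EVal (VInj I2 VUnit)) s [] Pos)
| S_delete n e s l :
    step (Cmd (EVal VDelete) (FVal (VRes n) e :: s) l Neg) (Cmd (EVal VUnit) s (n :: l) Pos).

Definition steps : command -> command -> Prop := clos_refl_trans command step.

(* Extend the type system with the rule [r_n : R] and
   annotate each judgment with the multiset of resource constants held by the term,
   contexts and multisets being taken up to permutation; the two components of
   [<t,u>] and the two branches of a case analysis share one multiset, since only
   one of them is ever run.  A term typed in L holds no resource, substituting a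
   value adds its resources to those of the term, and [new] and [delete] move a
   resource between the term and the freelist.  Hence every machine step preserves
   the multiset formed by the resources of the term, of the stack and of the
   freelist.  A value of central type holds no resource, so at the end the freelist
   is a permutation of the initial one. *)

From Stdlib Require Import List Permutation Arith Lia.
Import ListNotations.

Definition ty_eq_dec (A B : ty) : {A = B} + {A <> B}.
Proof. decide equality. Defined.

Definition binding_eq_dec (p q : var * ty) : {p = q} + {p <> q}.
Proof. decide equality; [apply ty_eq_dec | apply Nat.eq_dec]. Defined.

Ltac solve_perm dec :=
  let a := fresh "a" in
  apply (Permutation_count_occ dec); intro a;
  repeat match goal with
  | H : Permutation ?l1 ?l2 |- _ =>
      (pose proof (proj1 (Permutation_count_occ dec l1 l2) H a); clear H) || clear H
  end;
  repeat progress (rewrite ?count_occ_app in *; cbn [count_occ app] in * );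
  repeat match goal with
  | |- context [if ?d then _ else _] => destruct d
  | H : context [if ?d then _ else _] |- _ => destruct d
  end; lia.

(* Of the side conditions of [has_type], only the freshness of bound variables
   (to substitute under binders) and the polarity of the negative-annotated forms
   (for [central_value_no_resources]) are kept. *)
Inductive rtyped : ctx -> expr -> ty -> list nat -> Prop :=
| rt_var x A : rtyped [(x, A)] (EVal (VVar x)) A []
| rt_new : rtyped [] (EVal VNew) (TLolli TOne (TPlus TR TOne)) []
| rt_delete : rtyped [] (EVal VDelete) (TLolli TR TOne) []
| rt_res n : rtyped [] (EVal (VRes n)) TR [n]
| rt_unit : rtyped [] (EVal VUnit) TOne []
| rt_letPP G D G0 x t u A B r1 r2 r0 :
    rtyped D t A r1 -> rtyped ((x, A) :: G) u B r2 -> ~ In x (dom G) ->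
    Permutation (G ++ D) G0 -> Permutation (r1 ++ r2) r0 ->
    rtyped G0 (ELetP x t u) B r0
| rt_letPN G D G0 x t w A B r1 r2 r0 : tpol B = Neg ->
    rtyped D t A r1 -> rtyped ((x, A) :: G) (EVal w) B r2 -> ~ In x (dom G) ->
    Permutation (G ++ D) G0 -> Permutation (r1 ++ r2) r0 ->
    rtyped G0 (EVal (VLetP x t w)) B r0
| rt_letNP G D G0 x v u A B r1 r2 r0 :
    rtyped D (EVal v) A r1 -> rtyped ((x, A) :: G) u B r2 -> ~ In x (dom G) ->
    Permutation (G ++ D) G0 -> Permutation (r1 ++ r2) r0 ->
    rtyped G0 (ELetN x v u) B r0
| rt_letNN G D G0 x v w A B r1 r2 r0 : tpol B = Neg ->
    rtyped D (EVal v) A r1 -> rtyped ((x, A) :: G) (EVal w) B r2 -> ~ In x (dom G) ->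
    Permutation (G ++ D) G0 -> Permutation (r1 ++ r2) r0 ->
    rtyped G0 (EVal (VLetN x v w)) B r0
| rt_pair G D G0 v w A B r1 r2 r0 :
    rtyped G (EVal v) A r1 -> rtyped D (EVal w) B r2 ->
    Permutation (G ++ D) G0 -> Permutation (r1 ++ r2) r0 ->
    rtyped G0 (EVal (VPair v w)) (TTensor A B) r0
| rt_dtensP G D G0 v x y t A B C r1 r2 r0 :
    rtyped D (EVal v) (TTensor A B) r1 -> rtyped ((x, A) :: (y, B) :: G) t C r2 ->
    x <> y -> ~ In x (dom G) -> ~ In y (dom G) ->
    Permutation (G ++ D) G0 -> Permutation (r1 ++ r2) r0 ->
    rtyped G0 (EDtens v x y t) C r0
| rt_dtensN G D G0 v x y w A B C r1 r2 r0 : tpol C = Neg ->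
    rtyped D (EVal v) (TTensor A B) r1 -> rtyped ((x, A) :: (y, B) :: G) (EVal w) C r2 ->
    x <> y -> ~ In x (dom G) -> ~ In y (dom G) ->
    Permutation (G ++ D) G0 -> Permutation (r1 ++ r2) r0 ->
    rtyped G0 (EVal (VDtens v x y w)) C r0
| rt_dunitP G D G0 v t A r1 r2 r0 :
    rtyped D (EVal v) TOne r1 -> rtyped G t A r2 ->
    Permutation (G ++ D) G0 -> Permutation (r1 ++ r2) r0 ->
    rtyped G0 (EDunit v t) A r0
| rt_dunitN G D G0 v w A r1 r2 r0 : tpol A = Neg ->
    rtyped D (EVal v) TOne r1 -> rtyped G (EVal w) A r2 ->
    Permutation (G ++ D) G0 -> Permutation (r1 ++ r2) r0 ->
    rtyped G0 (EVal (VDunit v w)) A r0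
| rt_inj i G v A1 A2 r :
    rtyped G (EVal v) (sel i A1 A2) r -> rtyped G (EVal (VInj i v)) (TPlus A1 A2) r
| rt_dsumP G D G0 v x t y u A B C r1 r2 r0 :
    rtyped D (EVal v) (TPlus A B) r1 ->
    rtyped ((x, A) :: G) t C r2 -> rtyped ((y, B) :: G) u C r2 ->
    ~ In x (dom G) -> ~ In y (dom G) ->
    Permutation (G ++ D) G0 -> Permutation (r1 ++ r2) r0 ->
    rtyped G0 (EDsum v x t y u) C r0
| rt_dsumN G D G0 v x w y w' A B C r1 r2 r0 : tpol C = Neg ->
    rtyped D (EVal v) (TPlus A B) r1 ->
    rtyped ((x, A) :: G) (EVal w) C r2 -> rtyped ((y, B) :: G) (EVal w') C r2 ->
    ~ In x (dom G) -> ~ In y (dom G) ->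
    Permutation (G ++ D) G0 -> Permutation (r1 ++ r2) r0 ->
    rtyped G0 (EVal (VDsum v x w y w')) C r0
| rt_lam x G t A B r :
    rtyped ((x, A) :: G) t B r -> ~ In x (dom G) ->
    rtyped G (EVal (VLam x t)) (TLolli A B) r
| rt_appP G D G0 w v A B r1 r2 r0 :
    rtyped G (EVal w) A r1 -> rtyped D (EVal v) (TLolli A B) r2 ->
    Permutation (G ++ D) G0 -> Permutation (r1 ++ r2) r0 ->
    rtyped G0 (EApp v w) B r0
| rt_appN G D G0 w v A B r1 r2 r0 : tpol B = Neg ->
    rtyped G (EVal w) A r1 -> rtyped D (EVal v) (TLolli A B) r2 ->
    Permutation (G ++ D) G0 -> Permutation (r1 ++ r2) r0 ->
    rtyped G0 (EVal (VApp v w)) B r0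
| rt_with G t u A B r :
    rtyped G t A r -> rtyped G u B r -> rtyped G (EVal (VWith t u)) (TWith A B) r
| rt_projP i G v A1 A2 r :
    rtyped G (EVal v) (TWith A1 A2) r -> rtyped G (EPi i v) (sel i A1 A2) r
| rt_projN i G v A1 A2 r : tpol (sel i A1 A2) = Neg ->
    rtyped G (EVal v) (TWith A1 A2) r -> rtyped G (EVal (VPi i v)) (sel i A1 A2) r.

Lemma not_in_dom_perm G G' x : Permutation G G' -> ~ In x (dom G) -> ~ In x (dom G').
Proof.
  intros HG Hx Hin; apply Hx.
  eapply Permutation_in; [|exact Hin]. apply Permutation_map; symmetry; exact HG.
Qed.

Lemma rtyped_perm G t A r G' r' :
  rtyped G t A r -> Permutation G G' -> Permutation r r' -> rtyped G' t A r'.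
Proof.
  intros Ht; revert G' r'.
  induction Ht; intros G' r' HG Hr;
    try (apply Permutation_nil in HG; subst);
    try (apply Permutation_nil in Hr; subst);
    try solve [econstructor; eauto using perm_trans].
  - apply Permutation_length_1_inv in HG; subst; constructor.
  - apply Permutation_length_1_inv in Hr; subst; constructor.
  - constructor; [apply IHHt; auto | eapply not_in_dom_perm; eauto].
Qed.

Lemma in_dom_app_perm G D G0 z :
  Permutation (G ++ D) G0 -> In z (dom G0) -> In z (dom G) \/ In z (dom D).
Proof.
  intros HP Hz. apply in_app_or. unfold dom; rewrite <- map_app.
  eapply Permutation_in; [|exact Hz]. apply Permutation_map; symmetry; exact HP.
Qed.

(* Together with [subst_typed_dom], this makes the names chosen by [fresh_for] in
   [subst_e] avoid the substituted context. *)
Lemma rtyped_dom_fv G t A r : rtyped G t A r -> incl (dom G) (fv_e t).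
Proof.
  unfold incl; induction 1; intros z Hz; cbn in *;
    repeat match goal with
    | HP : Permutation (_ ++ _) ?G0, Hz : In z (dom ?G0) |- _ =>
        destruct (in_dom_app_perm _ _ _ _ HP Hz); clear HP Hz
    | Hx : ~ In ?x (dom ?G), Hz : In z (dom ?G) |- _ =>
        assert (z <> x) by (intros ->; contradiction); clear Hx
    end;
    rewrite ?in_app_iff; intuition (eauto 6 using in_in_remove, or_intror).
Qed.

Inductive subst_typed (s : var -> value) : ctx -> ctx -> list nat -> Prop :=
| subst_nil : subst_typed s [] [] []
| subst_cons z B G Dz rz D r :
    rtyped Dz (EVal (s z)) B rz -> subst_typed s G D r ->
    subst_typed s ((z, B) :: G) (Dz ++ D) (rz ++ r).

Lemma subst_typed_app_inv s G1 G2 D r :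
  subst_typed s (G1 ++ G2) D r ->
  exists D1 D2 r1 r2, subst_typed s G1 D1 r1 /\ subst_typed s G2 D2 r2 /\
    D = D1 ++ D2 /\ r = r1 ++ r2.
Proof.
  revert D r; induction G1 as [|[z B] G1 IH]; intros D r H; cbn in H.
  - exists [], D, [], r; repeat split; auto; constructor.
  - inversion H as [|? ? ? Dz rz D' r' Hz HG1]; subst.
    destruct (IH _ _ HG1) as (D1 & D2 & r1 & r2 & H1 & H2 & -> & ->).
    exists (Dz ++ D1), D2, (rz ++ r1), r2.
    repeat split; rewrite ?app_assoc; auto; constructor; auto.
Qed.

Lemma subst_typed_perm s G G' D r :
  Permutation G G' -> subst_typed s G D r ->
  exists D' r', subst_typed s G' D' r' /\ Permutation D D' /\ Permutation r r'.
Proof.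
  intros HG; revert D r; induction HG; intros D r H.
  - exists D, r; auto.
  - inversion H as [|? ? ? Dz rz D1 r1 Hz HG1]; subst.
    destruct (IHHG _ _ HG1) as (D' & r' & H1 & H2 & H3).
    exists (Dz ++ D'), (rz ++ r'); repeat split; try constructor; auto;
      apply Permutation_app_head; auto.
  - inversion H as [|? ? ? Dy ry D1 r1 Hy HG1]; subst.
    inversion HG1 as [|? ? ? Dx rx D2 r2 Hx HG2]; subst.
    exists (Dx ++ Dy ++ D2), (rx ++ ry ++ r2).
    repeat split; repeat constructor; auto;
      rewrite !app_assoc; apply Permutation_app_tail, Permutation_app_comm.
  - destruct (IHHG1 _ _ H) as (D1 & r1 & H1 & H2 & H3).
    destruct (IHHG2 _ _ H1) as (D2 & r2 & H4 & H5 & H6).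
    exists D2, r2; eauto using perm_trans.
Qed.

Lemma subst_typed_split s G D G0 Ds rs :
  Permutation (G ++ D) G0 -> subst_typed s G0 Ds rs ->
  exists DG DD rG rD, subst_typed s G DG rG /\ subst_typed s D DD rD /\
    Permutation (DG ++ DD) Ds /\ Permutation (rG ++ rD) rs.
Proof.
  intros HP H.
  destruct (subst_typed_perm _ _ _ _ _ (Permutation_sym HP) H) as (D' & r' & H1 & H2 & H3).
  destruct (subst_typed_app_inv _ _ _ _ _ H1) as (DG & DD & rG & rD & HG & HD & -> & ->).
  exists DG, DD, rG, rD; repeat split; auto; symmetry; auto.
Qed.

Lemma subst_typed_ext s s' G D r :
  (forall z, In z (dom G) -> s z = s' z) -> subst_typed s G D r -> subst_typed s' G D r.
Proof.
  intros Hs H; induction H; constructor.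
  - rewrite <- Hs; cbn; auto.
  - apply IHsubst_typed; intros; apply Hs; cbn; auto.
Qed.

Lemma upd_eq s x v : upd s x v x = v.
Proof. unfold upd; destruct (Nat.eq_dec x x); congruence. Qed.

Lemma upd_neq s x v z : z <> x -> upd s x v z = s z.
Proof. unfold upd; destruct (Nat.eq_dec z x); congruence. Qed.

Lemma subst_typed_upd s x x' A G DG rG :
  ~ In x (dom G) -> subst_typed s G DG rG ->
  subst_typed (upd s x (VVar x')) ((x, A) :: G) ((x', A) :: DG) rG.
Proof.
  intros Hx H. apply (subst_cons _ x A G [(x', A)] [] DG rG).
  - rewrite upd_eq; constructor.
  - eapply subst_typed_ext; [|exact H].
    intros z Hz; symmetry; apply upd_neq; intros ->; contradiction.
Qed.

Lemma subst_typed_upd2 s x x' y y' A B G DG rG :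
  x <> y -> ~ In x (dom G) -> ~ In y (dom G) -> subst_typed s G DG rG ->
  subst_typed (upd (upd s x (VVar x')) y (VVar y'))
    ((x, A) :: (y, B) :: G) ((x', A) :: (y', B) :: DG) rG.
Proof.
  intros Hxy Hx Hy H. apply (subst_cons _ x A _ [(x', A)] [] ((y', B) :: DG) rG).
  - rewrite upd_neq, upd_eq; auto; constructor.
  - apply (subst_typed_upd (upd s x (VVar x'))); auto.
    eapply subst_typed_ext; [|exact H].
    intros z Hz; symmetry; apply upd_neq; intros ->; contradiction.
Qed.

Lemma subst_typed_dom s G D r L :
  subst_typed s G D r -> incl (dom G) L -> incl (dom D) (range_fv s L).
Proof.
  induction 1 as [|z B G Dz rz D r Hz H IH]; intros HL w Hw; cbn in *; [tauto|].
  unfold dom in Hw; rewrite map_app, in_app_iff in Hw; destruct Hw as [Hw | Hw].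
  - apply in_flat_map; exists z; split; [apply HL; left; auto |].
    exact (rtyped_dom_fv _ _ _ _ Hz _ Hw).
  - apply IH; auto. intros a Ha; apply HL; right; exact Ha.
Qed.

Lemma fresh_for_not_in x L : ~ In (fresh_for x L) L.
Proof.
  unfold fresh_for; destruct (in_dec Nat.eq_dec x L) as [_ | Hx]; auto.
  intro H. pose proof (proj1 (list_max_le L (list_max L)) (le_n _)) as Hmax.
  rewrite Forall_forall in Hmax. apply Hmax in H. lia.
Qed.

Lemma fresh_for_subst_dom s G D r L avoid x :
  subst_typed s G D r -> incl (dom G) L -> incl (range_fv s L) avoid ->
  ~ In (fresh_for x avoid) (dom D).
Proof.
  intros H HL Havoid Hin. apply (fresh_for_not_in x avoid).
  apply Havoid; eapply subst_typed_dom; eauto.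
Qed.

Lemma fresh_for_cons_neq x a L : a <> fresh_for x (a :: L).
Proof. intros E; apply (fresh_for_not_in x (a :: L)); rewrite <- E; left; reflexivity. Qed.

Lemma incl_remove l m x : incl l m -> ~ In x l -> incl l (remove Nat.eq_dec x m).
Proof. intros Hlm Hx z Hz; apply in_in_remove; auto; intros ->; contradiction. Qed.

Ltac binder_scope :=
  repeat (apply incl_remove; [| assumption]);
  match goal with
  | Hbody : rtyped (_ :: _) _ _ _ |- incl _ _ =>
      intros ?z ?Hz; apply (rtyped_dom_fv _ _ _ _ Hbody); cbn; auto
  end.

Ltac subst_premise :=
  first
  [ assumption
  | match goal with
    | IH : forall s D rs, subst_typed s _ D rs -> rtyped D _ _ _ |- rtyped _ _ _ _ =>
        eapply IH; first [ eassumption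
                         | apply subst_typed_upd; eassumption
                         | apply subst_typed_upd2; eassumption ]
    end
  | solve [eapply fresh_for_subst_dom;
             [eassumption | | first [apply incl_refl | apply incl_tl, incl_refl]];
           binder_scope]
  | apply fresh_for_cons_neq
  | solve_perm Nat.eq_dec ].

Lemma rtyped_subst G t A r s D rs :
  rtyped G t A r -> subst_typed s G D rs -> rtyped D (subst_e s t) A (r ++ rs).
Proof.
  intros Ht; revert s D rs.
  induction Ht; intros s Ds rs Hs; cbn [subst_e subst_v].
  all: try (inversion Hs; subst; constructor; fail).
  1: { inversion Hs as [|? ? ? Dz rz D r Hz Hnil]; subst; inversion Hnil; subst.
       rewrite !app_nil_r; exact Hz. }
  all: try match goal with
           | HP : Permutation (_ ++ _) ?G0, HS : subst_typed _ ?G0 _ _ |- _ =>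
               destruct (subst_typed_split _ _ _ _ _ _ HP HS)
                 as (DG & DD & rG & rD & HG & HD & HPD & HPr)
           end.
  all: econstructor; subst_premise.
Qed.

Lemma subst_typed_rename (rho : var -> var) G :
  subst_typed (fun z => VVar (rho z)) G (map (fun p => (rho (fst p), snd p)) G) [].
Proof.
  induction G as [|[z B] G IH]; cbn; [constructor |].
  exact (subst_cons _ z B G [(rho z, B)] [] _ [] (rt_var _ _) IH).
Qed.

Lemma has_type_NoDup_dom G t A : has_type G t A -> NoDup (dom G).
Proof.
  induction 1; cbn; auto; repeat constructor; auto.
  inversion IHhas_type; auto.
Qed.

Lemma NoDup_dom_middle G x A G' :
  NoDup (dom (G ++ (x, A) :: G')) -> ~ In x (dom (G ++ G')) /\ NoDup (dom (G ++ G')).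
Proof.
  unfold dom; rewrite !map_app; intros H.
  split; [apply NoDup_remove_2 in H | apply NoDup_remove_1 in H]; exact H.
Qed.

Lemma not_in_dom_middle G y B G' x :
  ~ In x (dom (G ++ (y, B) :: G')) -> x <> y /\ ~ In x (dom (G ++ G')).
Proof.
  unfold dom; rewrite !map_app, !in_app_iff; cbn; intros H.
  split; [intros -> | intros [Hx | Hx]]; tauto.
Qed.

Ltac rtyped_premise :=
  first
  [ eassumption
  | match goal with
    | IH : rtyped _ ?t _ _ |- rtyped _ ?t _ _ =>
        eapply rtyped_perm; [exact IH | solve_perm binding_eq_dec | constructor]
    end
  | solve_perm Nat.eq_dec
  | solve_perm binding_eq_dec ].

Lemma has_type_rtyped G t A : has_type G t A -> rtyped G t A [].
Proof.
  induction 1;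
    repeat match goal with H : has_type _ _ _ |- _ => apply has_type_NoDup_dom in H end;
    repeat match goal with
    | H : NoDup (dom (_ ++ (_, _) :: _)) |- _ => apply NoDup_dom_middle in H as [? H]
    | H : ~ In _ (dom (_ ++ (_, _) :: _)) |- _ => apply not_in_dom_middle in H as [? H]
    end;
    rewrite ?app_nil_r in *.
  - constructor.
  - eapply rtyped_perm; [eapply rtyped_subst; [eassumption | apply subst_typed_rename] |
                         eassumption | constructor].
  - constructor.
  - constructor.
  - eapply rt_letPP with (G := G) (r1 := []) (r2 := []); rtyped_premise.
  - eapply rt_letPN with (G := G) (r1 := []) (r2 := []); rtyped_premise.
  - eapply rt_letNP with (G := G) (r1 := []) (r2 := []); rtyped_premise.
  - eapply rt_letNN with (G := G) (r1 := []) (r2 := []); rtyped_premise.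
  - eapply rt_pair with (r1 := []) (r2 := []); rtyped_premise.
  - eapply rt_dtensP with (G := G ++ G') (r1 := []) (r2 := []); rtyped_premise.
  - eapply rt_dtensN with (G := G ++ G') (r1 := []) (r2 := []); rtyped_premise.
  - constructor.
  - eapply rt_dunitP with (G := G ++ G') (r1 := []) (r2 := []); rtyped_premise.
  - eapply rt_dunitN with (G := G ++ G') (r1 := []) (r2 := []); rtyped_premise.
  - constructor; assumption.
  - eapply rt_dsumP with (G := G ++ G') (r1 := []) (r2 := []); rtyped_premise.
  - eapply rt_dsumN with (G := G ++ G') (r1 := []) (r2 := []); rtyped_premise.
  - apply NoDup_cons_iff in H as [Hx _]; constructor; assumption.
  - eapply rt_appP with (r1 := []) (r2 := []); rtyped_premise.
  - eapply rt_appN with (r1 := []) (r2 := []); rtyped_premise.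
  - constructor; assumption.
  - constructor; assumption.
  - constructor; assumption.
Qed.

Lemma rtyped_subst1 x A t B r v rv :
  rtyped [(x, A)] t B r -> rtyped [] (EVal v) A rv -> rtyped [] (subst1 t v x) B (r ++ rv).
Proof.
  intros Ht Hv. rewrite <- (app_nil_r rv).
  apply (rtyped_subst _ _ _ _ _ _ _ Ht).
  apply (subst_cons _ x A [] [] rv [] []); [rewrite upd_eq; exact Hv | constructor].
Qed.

Lemma rtyped_subst2 x A y B t C r v rv w rw :
  x <> y -> rtyped [(x, A); (y, B)] t C r ->
  rtyped [] (EVal v) A rv -> rtyped [] (EVal w) B rw ->
  rtyped [] (subst2 t v x w y) C (r ++ rv ++ rw).
Proof.
  intros Hxy Ht Hv Hw. rewrite <- (app_nil_r rw).
  apply (rtyped_subst _ _ _ _ _ _ _ Ht).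
  apply (subst_cons _ x A _ [] rv [] (rw ++ [])); [rewrite upd_neq, upd_eq; auto |].
  apply (subst_cons _ y B [] [] rw [] []); [rewrite upd_eq; exact Hw | constructor].
Qed.

Lemma rtyped_subst1v x A w B r v rv :
  rtyped [(x, A)] (EVal w) B r -> rtyped [] (EVal v) A rv ->
  rtyped [] (EVal (subst1v w v x)) B (r ++ rv).
Proof. apply (rtyped_subst1 x A (EVal w)). Qed.

Lemma rtyped_subst2v x A y B w C r v rv w' rw :
  x <> y -> rtyped [(x, A); (y, B)] (EVal w) C r ->
  rtyped [] (EVal v) A rv -> rtyped [] (EVal w') B rw ->
  rtyped [] (EVal (subst2v w v x w' y)) C (r ++ rv ++ rw).
Proof. apply (rtyped_subst2 x A y B (EVal w)). Qed.

(* [stack_typed s A C r]: [s] turns a term of type [A] into one of type [C] and holds [r]. *)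
Inductive stack_typed : stack -> ty -> ty -> list nat -> Prop :=
| stack_nil A : stack_typed [] A A []
| stack_let x u e s A B C r rs :
    rtyped [(x, A)] u B r -> stack_typed s B C rs ->
    stack_typed (FLet x u e :: s) A C (r ++ rs)
| stack_arg v e s A B C r rs :
    rtyped [] (EVal v) A r -> stack_typed s B C rs ->
    stack_typed (FVal v e :: s) (TLolli A B) C (r ++ rs)
| stack_proj i e s A1 A2 C rs :
    stack_typed s (sel i A1 A2) C rs -> stack_typed (FProj i e :: s) (TWith A1 A2) C rs.

Definition cmd_typed (c : command) (W : ty) (M : list nat) : Prop :=
  exists A rt rs, rtyped [] (c_term c) A rt /\ stack_typed (c_stack c) A W rs /\
    Permutation (rt ++ rs ++ c_res c) M.

Lemma Permutation_app_nil_inv {T} (G D : list T) : Permutation (G ++ D) [] -> G = [] /\ D = [].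
Proof. intros H; apply app_eq_nil, Permutation_nil, Permutation_sym, H. Qed.

Ltac nil_contexts :=
  repeat match goal with
  | H : Permutation (_ ++ _) [] |- _ => apply Permutation_app_nil_inv in H as [? ?]; subst
  end.

Ltac invert_typing H := inversion H; subst; clear H; nil_contexts.

Ltac invert_canonical_values :=
  repeat match goal with
  | H : rtyped [] (EVal (VPair _ _)) _ _ |- _ => invert_typing H
  | H : rtyped [] (EVal VUnit) _ _ |- _ => invert_typing H
  | H : rtyped [] (EVal (VInj _ _)) _ _ |- _ => invert_typing H
  | H : rtyped [] (EVal (VRes _)) _ _ |- _ => invert_typing H
  end.

Lemma step_preserves_cmd_typed c c' W M : step c c' -> cmd_typed c W M -> cmd_typed c' W M.
Proof.
  intros Hstep (A & rt & rs & Ht & Hs & HM); destruct Hstep; cbn in *;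
    (* only in [S_pop] is the term an arbitrary value, which must not be inverted *)
    lazymatch type of Ht with
    | rtyped _ (EVal ?v) _ _ => tryif is_var v then idtac else invert_typing Ht
    | _ => invert_typing Ht
    end;
    lazymatch type of Hs with
    | stack_typed (_ :: _) _ _ _ => invert_typing Hs
    | _ => idtac
    end;
    invert_canonical_values; try destruct i;
    do 3 eexists; cbn;
    (split; [ solve [eauto using rtyped_subst1, rtyped_subst1v, rtyped_subst2, rtyped_subst2v, rtyped]
            | split; [eauto using stack_typed | solve_perm Nat.eq_dec]]).
Qed.

Lemma steps_preserve_cmd_typed c c' W M : steps c c' -> cmd_typed c W M -> cmd_typed c' W M.
Proof. induction 1; eauto using step_preserves_cmd_typed. Qed.

Lemma central_tpol W : central W -> tpol W = Pos.
Proof. destruct 1; reflexivity. Qed.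

Lemma central_value_no_resources G v W r : rtyped G (EVal v) W r -> central W -> r = [].
Proof.
  intros Hv; remember (EVal v) as t eqn:Et; revert v Et.
  induction Hv; intros v0 Et HW; try discriminate; auto;
    try (apply central_tpol in HW; congruence); inversion HW; subst.
  - erewrite IHHv1, IHHv2 in *; eauto. apply Permutation_nil; assumption.
  - destruct i; eauto.
Qed.

Theorem theorem5 (W : ty) (t : expr) :
  central W -> fv_e t = nil -> has_type nil t W ->
  forall (v : value) (l l' : reslist) (e : pol),
    steps (Cmd t nil l Pos) (Cmd (EVal v) nil l' e) ->
    Permutation l l'.
Proof.
  (* closedness already follows from typing in the empty context *)
  intros HW _ Ht v l l' e Hsteps.
  assert (Hinit : cmd_typed (Cmd t [] l Pos) W l).
  { exists W, [], []; cbn.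
    split; [apply has_type_rtyped, Ht | split; [constructor | apply Permutation_refl]]. }
  destruct (steps_preserve_cmd_typed _ _ _ _ Hsteps Hinit) as (A & rv & rs & Hv & Hs & Hl).
  inversion Hs; subst.
  rewrite (central_value_no_resources _ _ _ _ Hv HW) in Hl.
  symmetry; exact Hl.
Qed.
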